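(* Let $p$ be an odd prime and let $\Phi_{p^2-1}(x)\in\mathbb{Z}[x]$ be the $(p^2-1)$-th cyclotomic polynomial. Let $$F(x)=\prod_{1\le s<t\le (p^2-1)/2}(x^{2t}-x^{2s}),\qquad T(x)=(-1)^{\frac{p^2+7}{8}}\left(\frac{p^2-1}{2}\right)^{\frac{p^2-1}{4}}x^{\frac{p^2-1}{4}}.$$ Then $\Phi_{p^2-1}(x)$ divides $F(x)-T(x)$ in $\mathbb{Z}[x]$. *)

From mathcomp Require Import all_boot all_algebra all_field.
Set Implicit Arguments. Unset Strict Implicit. Unset Printing Implicit Defensive.
Import GRing.Theory Num.Theory.
Local Open Scope ring_scope.

Definition lemF (p : nat) : {poly int} :=
  \prod_(1 <= t < ((p ^ 2 - 1) %/ 2).+1) \prod_(1 <= s < t)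
     ('X^(2 * t) - 'X^(2 * s)).

Definition lemT (p : nat) : {poly int} :=
  (((-1) ^+ ((p ^ 2 + 7) %/ 8) * ((((p ^ 2 - 1) %/ 2)%N)%:Z) ^+ ((p ^ 2 - 1) %/ 4))%:P)
    * 'X^((p ^ 2 - 1) %/ 4).

From mathcomp Require Import all_boot all_algebra all_field.
From mathcomp Require Import zify.
Set Implicit Arguments. Unset Strict Implicit. Unset Printing Implicit Defensive.
Import GRing.Theory Num.Theory.
Local Open Scope ring_scope.

(* Let z be a primitive (p^2-1)-th root of unity and m = (p^2-1)/2 = 4k, so
   that z^m = -1.  Writing z^(2t) - z^(2s) = z^(t+s) c_(t-s) with
   c_d = z^d - z^-d, F(z) is a power of z times the product of the partial
   products C_t = c_1 ... c_(t-1).  As c_(m-d) = c_d we get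
   C_(t+1) C_(m-t) = C_m, so this product is C_m^(m/2) = (C_m^2)^k, and
   C_m^2 z^(m(m-1)) = prod_(0<d<m) (1 - z^(2d))^2 = m^2.  Reducing the
   exponent of z modulo 2m then gives F(z) = T(z).  Since Phi_(p^2-1) is
   monic and is the minimal polynomial of z over Q, it divides F - T in Z[x]. *)

Lemma sum_nat_double n : (2 * \sum_(1 <= d < n) d = n * n.-1)%N.
Proof.
elim: n => [|n IHn]; first by rewrite big_geq.
case: n IHn => [|n IHn]; first by rewrite big_geq.
by rewrite big_nat_recr //= mulnDr IHn; nia.
Qed.

Lemma sum_pairs_double m :
  (2 * \sum_(1 <= t < m.+1) \sum_(1 <= s < t) (t + s) = m.+1 * m * m.-1)%N.
Proof.
have inner t : (2 * \sum_(1 <= s < t) (t + s) = 3 * t * t.-1)%N.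
  by rewrite big_split /= sum_nat_const_nat mulnDr sum_nat_double; lia.
elim: m => [|m IHm]; first by rewrite big_geq.
by rewrite big_nat_recr //= mulnDr IHm inner; nia.
Qed.

Lemma dvd8_sqr_sub1 p : odd p -> (8 %| p ^ 2 - 1)%N.
Proof.
move=> odd_p; have := odd_double_half p; rewrite odd_p => <-.
have := odd_double_half p./2; case: (odd p./2) => <-; apply/dvdnP.
- by exists (p./2./2 * p./2./2.*2.+1 + p./2./2.*2.+1); rewrite -!muln2; nia.
- by exists (p./2./2 * p./2./2.*2.+1); rewrite -!muln2; nia.
Qed.

Lemma prod_nat_pairs (R : comPzSemiRingType) (f : nat -> R) h c :
  (forall t, (t < h)%N -> f t.+1 * f (h.*2 - t)%N = c) ->
  \prod_(1 <= t < (h.*2).+1) f t = c ^+ h.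
Proof.
move=> fc; rewrite (big_cat_nat _ (n := h.+1)) //=; last by rewrite ltnS -addnn leq_addr.
have -> : \prod_(h.+1 <= t < h.*2.+1) f t = \prod_(0 <= t < h) f (h.*2 - t)%N.
  rewrite big_nat_rev -{1}[h.+1]add0n big_addn.
  have -> : (h.*2.+1 - h.+1 = h)%N by lia.
  by apply: eq_big_nat => t /andP[_ th]; congr f; lia.
rewrite big_add1 /= -big_split /= -[h in c ^+ h]subn0 -prodr_const_nat.
by apply: eq_big_nat => t /andP[_ th]; rewrite fc.
Qed.

Lemma prod_one_sub_prim_root (F : fieldType) n (w : F) :
  n.-primitive_root w -> \prod_(1 <= d < n) (1 - w ^+ d) = n%:R.
Proof.
move=> prim_w; have := factor_Xn_sub_1 prim_w.
case: n prim_w => [/prim_order_gt0 //|n _].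
rewrite big_nat_recl // expr0 polyC1 -{3}(expr1n {poly F} n.+1) subrXX.
have X1_neq0 : 'X - 1 != 0 :> {poly F} by rewrite -polyC1 polyXsubC_eq0.
move/(mulfI X1_neq0)/(congr1 (horner^~ 1)); rewrite horner_prod horner_sum.
under eq_bigr do rewrite hornerXsubC.
under [RHS]eq_bigr do rewrite expr1n mulr1 hornerXn expr1n.
by rewrite big_add1 sumr_const card_ord => <-.
Qed.

Section HalfOrderRoot.
Variables (F : fieldType) (m : nat) (z : F).
Hypothesis prim_z : (m.*2).-primitive_root z.

Let z_neq0 : z != 0.
Proof. by rewrite (prim_root_eq0 prim_z) -lt0n (prim_order_gt0 prim_z). Qed.

Let z_unit : z \is a GRing.unit.
Proof. by rewrite unitfE. Qed.

Lemma prim_root_expr_half : z ^+ m = -1.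
Proof.
have m_gt0 : (0 < m)%N by rewrite -double_gt0 (prim_order_gt0 prim_z).
have : (z ^+ m - 1) * (z ^+ m + 1) = 0.
  by rewrite -subr_sqr expr1n -exprM muln2 (prim_expr_order prim_z) subrr.
move/eqP; rewrite mulf_eq0 subr_eq0 addr_eq0 => /orP[/eqP zm1|/eqP //].
have /dvdn_leq : (m.*2 %| m)%N by rewrite (prim_order_dvd prim_z) zm1.
by move=> /(_ m_gt0); rewrite -addnn; lia.
Qed.

Lemma prim_root_sqr : m.-primitive_root (z ^+ 2).
Proof. by have := exp_prim_root prim_z 2; rewrite -muln2 gcdnMl mulnK. Qed.

Definition chord d := z ^+ d - z ^- d.

Definition chord_prod t := \prod_(1 <= d < t) chord d.

Lemma chordE d : chord d = z ^- d * ((z ^+ 2) ^+ d - 1).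
Proof.
by rewrite /chord mulrBr mulr1 -exprM mulnC muln2 -addnn exprD mulKf ?expf_neq0.
Qed.

Lemma chord_sub d : (d <= m)%N -> chord (m - d) = chord d.
Proof.
move=> le_dm; rewrite /chord exprB // prim_root_expr_half mulN1r.
by rewrite invrN invrK opprK addrC.
Qed.

Lemma subr_expr_double s t : (s < t)%N ->
  z ^+ (2 * t) - z ^+ (2 * s) = z ^+ (t + s) * chord (t - s).
Proof.
move=> lt_st; rewrite /chord mulrBr -exprD -exprB //; last by lia.
by congr (z ^+ _ - z ^+ _); lia.
Qed.

Lemma prod_sub_expr_double t :
  \prod_(1 <= s < t) (z ^+ (2 * t) - z ^+ (2 * s)) =
  z ^+ (\sum_(1 <= s < t) (t + s)) * chord_prod t.
Proof.
have -> : chord_prod t = \prod_(1 <= s < t) chord (t - s).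
  rewrite /chord_prod big_nat_rev; apply: eq_big_nat => s /andP[_ lt_st].
  by congr chord; lia.
rewrite -prodrXr -big_split /=.
by apply: eq_big_nat => s /andP[_ lt_st]; rewrite subr_expr_double.
Qed.

Lemma chord_prodS_sub t : (t < m)%N -> chord_prod t.+1 * chord_prod (m - t) = chord_prod m.
Proof.
elim: t => [_|t IHt lt_tm]; first by rewrite /chord_prod big_geq // mul1r subn0.
have eq_mt : (m - t = (m - t.+1).+1)%N by lia.
rewrite -(IHt (ltnW lt_tm)) eq_mt /chord_prod (big_nat_recr t.+1) //.
rewrite (big_nat_recr (m - t.+1)) /=; last by lia.
by rewrite chord_sub 1?ltnW // -!mulrA [chord _ * _]mulrC.
Qed.

Lemma prod_chord_prod h : m = h.*2 -> \prod_(1 <= t < m.+1) chord_prod t = chord_prod m ^+ h.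
Proof.
move=> m_double; rewrite m_double; apply: prod_nat_pairs => t lt_th.
by rewrite -m_double chord_prodS_sub // m_double -addnn ltn_addr.
Qed.

Lemma chord_prod_sqr : (chord_prod m * z ^+ (\sum_(1 <= d < m) d)) ^+ 2 = m%:R ^+ 2.
Proof.
rewrite -(prod_one_sub_prim_root prim_root_sqr) /chord_prod -prodrXr -big_split /=.
rewrite -!prodrXl; apply: eq_bigr => d _.
by rewrite chordE mulrC mulrA mulfV ?expf_neq0 // mul1r -sqrrN opprB.
Qed.

Lemma prod_sub_expr_double_eval k : m = (4 * k)%N ->
  \prod_(1 <= t < m.+1) \prod_(1 <= s < t) (z ^+ (2 * t) - z ^+ (2 * s)) =
  (-1) ^+ k.+1 * m%:R ^+ (2 * k) * z ^+ (2 * k).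
Proof.
move=> m4k; have k_gt0 : (0 < k)%N by have := prim_order_gt0 prim_z; rewrite m4k -addnn; lia.
set a := (\sum_(1 <= d < m) d)%N.
set S := (\sum_(1 <= t < m.+1) \sum_(1 <= s < t) (t + s))%N.
(* 2S = (m+1)m(m-1) and 2a = m(m-1); the last summand is a multiple of the order of z. *)
have eq_S : S = (m * k.+1 + 2 * k + a * (2 * k) + m.*2 * (2 * k * k - 1))%N.
  have := sum_nat_double m; have := sum_pairs_double m; rewrite -/a -/S m4k; nia.
have zS : z ^+ S = (-1) ^+ k.+1 * z ^+ (2 * k) * (z ^+ a) ^+ (2 * k).
  rewrite eq_S 3!exprD [z ^+ (m.*2 * _)]exprM (prim_expr_order prim_z) expr1n mulr1.
  by rewrite [z ^+ (m * _)]exprM prim_root_expr_half [z ^+ (a * _)]exprM.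
under eq_bigr do rewrite prod_sub_expr_double.
rewrite big_split /= prodrXr (prod_chord_prod (h := 2 * k)); last by rewrite m4k -muln2; lia.
rewrite zS -!mulrA -exprMn [z ^+ a * _]mulrC.
have -> : (chord_prod m * z ^+ a) ^+ (2 * k) = m%:R ^+ (2 * k).
  by rewrite exprM chord_prod_sqr -exprM.
by rewrite [z ^+ _ * _]mulrC mulrA.
Qed.

End HalfOrderRoot.

Lemma Cyclotomic_dvdp n (z : algC) (P : {poly int}) :
  n.-primitive_root z -> root (map_poly intr P) z -> 'Phi_n %| P.
Proof.
move=> prim_z Pz; have [q [Dq _] minq] := minCpolyP z.
have ratr_intr (r : {poly int}) :
    map_poly ratr (map_poly intr r : {poly rat}) = map_poly intr r :> {poly algC}.
  by rewrite -map_poly_comp; apply: eq_map_poly => x /=; rewrite rmorph_int.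
have Phi_q : q = map_poly intr 'Phi_n.
  apply: (map_inj_poly (fmorph_inj (ratr : {rmorphism rat -> algC}))); first exact: rmorph0.
  by rewrite -Dq (minCpoly_cyclotomic prim_z) ratr_intr (Cintr_Cyclotomic prim_z).
by rewrite -dvdp_rat_int -Phi_q -minq ratr_intr.
Qed.

Lemma horner_lemF (R : comNzRingType) p (x : R) :
  (map_poly intr (lemF p)).[x] =
  \prod_(1 <= t < ((p ^ 2 - 1) %/ 2).+1) \prod_(1 <= s < t) (x ^+ (2 * t) - x ^+ (2 * s)).
Proof.
rewrite /lemF rmorph_prod horner_prod; apply: eq_bigr => t _.
rewrite rmorph_prod horner_prod; apply: eq_bigr => s _.
by rewrite rmorphB /= !map_polyXn hornerD hornerN !hornerXn.
Qed.

Lemma horner_lemT (R : comNzRingType) p (x : R) :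
  (map_poly intr (lemT p)).[x] =
  (-1) ^+ ((p ^ 2 + 7) %/ 8) * ((p ^ 2 - 1) %/ 2)%:R ^+ ((p ^ 2 - 1) %/ 4) *
  x ^+ ((p ^ 2 - 1) %/ 4).
Proof.
rewrite /lemT rmorphM /= map_polyC map_polyXn hornerCM hornerXn /=.
by rewrite rmorphM /= !rmorphXn /= rmorphN1 pmulrn.
Qed.

Theorem lemma2p5 (p : nat) (hp : prime p) (hodd : odd p) :
  exists g : {poly int}, lemF p - lemT p = g * 'Phi_(p ^ 2 - 1).
Proof.
have p_gt1 := prime_gt1 hp.
have /dvdnP[k p2_8k] := dvd8_sqr_sub1 hodd.
have k_gt0 : (0 < k)%N by nia.
have [z prim_z] : {z : algC | ((4 * k).*2).-primitive_root z}.
  by apply: C_prim_root_exists; rewrite double_gt0 muln_gt0.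
have -> : (p ^ 2 - 1 = (4 * k).*2)%N by lia.
have /dvdpP_int[g ->] : 'Phi_((4 * k).*2) %| lemF p - lemT p.
  apply: (Cyclotomic_dvdp prim_z); apply/rootP.
  rewrite rmorphB hornerD hornerN horner_lemF horner_lemT.
  have -> : ((p ^ 2 - 1) %/ 2 = 4 * k)%N by lia.
  have -> : ((p ^ 2 - 1) %/ 4 = 2 * k)%N by lia.
  have -> : ((p ^ 2 + 7) %/ 8 = k.+1)%N by lia.
  by rewrite (prod_sub_expr_double_eval prim_z (k := k)) ?subrr.
by exists g; rewrite zprimitive_monic ?Cyclotomic_monic // mulrC.
Qed.
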